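(* Let $p$ be a state whose ratios $p_i/g_i$ ($i=0,\dots,d-1$) are pairwise distinct. If $T$ is an extreme point of $TP(d)$ that is not biplanar, then $Tp$ is not an extreme point of $p^{TP}=\{Sp:S\in TP(d)\}$.
   Context: Fix $d\ge 2$, $\beta\in(0,\infty)$ and pairwise distinct reals $E_0=0,E_1,\dots,E_{d-1}$. Put $q_{m,n}=e^{-\beta(E_m-E_n)}$, $Z=\sum_j q_{j,0}$, $g_i=q_{i,0}/Z$. A state is a probability vector in $\mathbb{R}^d$. $TP(d)$ is the set of $d\times d$ real matrices with non-negative entries, columns summing to $1$, and $Tg=g$. For $T\in TP(d)$, $G(T)$ is the bipartite graph with left vertices $L_0,\dots,L_{d-1}$ (columns), right vertices $R_0,\dots,R_{d-1}$ (rows), and an edge $\{L_j,R_i\}$ iff $T_{ij}>0$. Given orderings $\lambda,\mu$ (permutations of $\{0,\dots,d-1\}$), place $L_{\lambda_a}$ at height $a$ on one vertical line and $R_{\mu_b}$ at height $b$ on a parallel line, edges drawn straight; the drawing is plain if there are no two edges $\{L_{\lambda_a},R_{\mu_b}\}$, $\{L_{\lambda_{a'}},R_{\mu_{b'}}\}$ with $a<a'$ and $b>b'$. An extreme point $T$ of $TP(d)$ is biplanar if some pair $(\lambda,\mu)$ gives a plain drawing of $G(T)$. *)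

From HB Require Import structures.
From mathcomp Require Import all_boot all_order all_algebra all_fingroup.
From mathcomp Require Import reals sequences exp.
Set Implicit Arguments. Unset Strict Implicit. Unset Printing Implicit Defensive.
Import Order.TTheory GRing.Theory Num.Theory.
Local Open Scope ring_scope.

Section Defs.
Variable R : realType.

Definition qfac (d : nat) (beta : R) (E : 'I_d -> R) (m n : 'I_d) : R :=
  expR (- beta * (E m - E n)).

(* the Gibbs state g_i = q_{i,0} / Z, Z = sum_j q_{j,0}; index 0 is any i with
   val i = 0 (d >= 2 is assumed in the theorem, so this is well defined) *)
Definition gibbs (d : nat) (beta : R) (E : 'I_d -> R) (i0 : 'I_d) : 'cV[R]_d :=
  \col_i (qfac beta E i i0 / \sum_j qfac beta E j i0).

Definition is_state (d : nat) (p : 'cV[R]_d) : Prop :=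
  (forall i, 0 <= p i 0) /\ \sum_i p i 0 = 1.

Definition TP (d : nat) (g : 'cV[R]_d) (T : 'M[R]_d) : Prop :=
  [/\ forall i j, 0 <= T i j,
      forall j, \sum_i T i j = 1
    & T *m g = g].

Definition extreme_point (V : lmodType R) (A : V -> Prop) (x : V) : Prop :=
  A x /\
  forall (y z : V) (t : R), A y -> A z -> 0 < t -> t < 1 ->
    x = t *: y + (1 - t) *: z -> y = x /\ z = x.

(* plain drawing of G(T) for orderings lam (left/columns) and mu (right/rows):
   L_{lam a} is at height a, R_{mu b} at height b; edge {L_j, R_i} iff T i j > 0 *)
Definition plain_drawing (d : nat) (T : 'M[R]_d) (lam mu : 'S_d) : Prop :=
  forall a a' b b' : 'I_d, (a < a')%N -> (b' < b)%N ->
    ~ (0 < T (mu b) (lam a) /\ 0 < T (mu b') (lam a')).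

Definition biplanar (d : nat) (g : 'cV[R]_d) (T : 'M[R]_d) : Prop :=
  extreme_point (TP g) T /\ exists lam mu : 'S_d, plain_drawing T lam mu.

Definition TP_orbit (d : nat) (g p : 'cV[R]_d) (v : 'cV[R]_d) : Prop :=
  exists S : 'M[R]_d, TP g S /\ v = S *m p.

End Defs.

(* Write [r j = p_j / g_j].  For distinct rows [i, i'] with edges [(i,j)] and
   [(i',j')], moving mass [e / g_j] from [(i,j)] to [(i',j)] and [e / g_j'] from
   [(i',j')] to [(i,j')] keeps [T] in [TP(d)] for small [e > 0] and moves [T p]
   by [e (r_j' - r_j) (δ_i - δ_i')].  If [T p] is extreme in [p^TP], no two
   such exchanges can move it in opposite directions.  Ordering the columns by
   [r], this forbids a row with a column strictly inside the column range of
   another row, and two rows sharing a column that both have further columns on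
   the same side of it.  So the column ranges of distinct rows overlap in at
   most an endpoint, and listing the rows by the midpoints of their ranges
   gives a plain drawing of [G(T)]. *)

From HB Require Import structures.
From mathcomp Require Import all_boot all_order all_algebra all_fingroup.
From mathcomp Require Import reals exp.
From mathcomp Require Import ring lra zify.
Import Order.TTheory GRing.Theory Num.Theory.
Set Implicit Arguments. Unset Strict Implicit. Unset Printing Implicit Defensive.
Local Open Scope ring_scope.

Section SortPerm.
Variables (disp : Order.disp_t) (X : orderType disp) (n : nat) (key : 'I_n -> X).

Let sorted_ords := sort (fun i j => (key i <= key j)%O) (enum 'I_n).

Let mem_sorted_ords i : i \in sorted_ords.
Proof. by rewrite mem_sort mem_enum. Qed.

Let index_sorted_ords_lt i : (index i sorted_ords < n)%N.
Proof.
by rewrite -{2}(size_enum_ord n) -(size_sort (fun i j => (key i <= key j)%O)) index_mem.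
Qed.

Let sort_rank_inj : injective (fun i => Ordinal (index_sorted_ords_lt i)).
Proof. by move=> i j /(congr1 val) /= /index_inj; apply. Qed.

Definition sort_perm : 'S_n := perm sort_rank_inj.

Lemma sort_perm_homo i j : (key i < key j)%O -> (sort_perm i < sort_perm j)%N.
Proof.
rewrite !permE /=; apply: contraTT; rewrite -leqNgt -leNgt.
have key_le_trans : transitive (fun i j => (key i <= key j)%O).
  by move=> y x z; apply: le_trans.
apply: (sorted_leq_index key_le_trans) => //.
by apply: sort_sorted => x y; apply: le_total.
Qed.

End SortPerm.

Section PlainDrawing.
Variables (R : realType) (d : nat) (T : 'M[R]_d) (r : 'I_d -> R).
Hypothesis r_inj : injective r.
Hypothesis no_interleaving : forall i i' j1 j2 j3 : 'I_d, i != i' ->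
  r j1 < r j2 -> r j2 < r j3 -> 0 < T i j1 -> 0 < T i j3 -> 0 < T i' j2 -> False.
Hypothesis no_shared_column_same_side : forall i i' j ja jb : 'I_d, i != i' ->
  0 < T i j -> 0 < T i' j -> 0 < T i ja -> 0 < T i' jb ->
  0 < (r ja - r j) * (r jb - r j) -> False.

Local Notation col := (sort_perm r).

Let lt_r_of_lt_col j j' : (col j < col j')%N -> r j < r j'.
Proof.
move=> lt_jj'; case: ltgtP => // [/sort_perm_homo|/r_inj eq_jj']; first lia.
by move: lt_jj'; rewrite eq_jj' ltnn.
Qed.

Let hi i := (\max_(j | (0 < T i j)%R) col j)%N.
(* A [\min] written with [\max], since [nat] has no top element. *)
Let lo i := (d - \max_(j | (0 < T i j)%R) (d - col j))%N.

Let hi_ge i j : 0 < T i j -> (col j <= hi i)%N.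
Proof. exact: leq_bigmax_cond. Qed.

Let lo_le i j : 0 < T i j -> (lo i <= col j)%N.
Proof.
move=> Tij.
have := @leq_bigmax_cond _ (fun j => 0 < T i j) (fun j => d - col j)%N j Tij.
rewrite /lo; have := ltn_ord (col j); lia.
Qed.

Let hi_attained i j : 0 < T i j -> exists2 jb, 0 < T i jb & hi i = col jb.
Proof.
move=> Tij; have [|jb] := @eq_bigmax_cond _ [pred j | 0 < T i j] (fun j => col j : nat).
  by apply/card_gt0P; exists j.
by rewrite inE; exists jb.
Qed.

Let lo_attained i j : 0 < T i j -> exists2 ja, 0 < T i ja & lo i = col ja.
Proof.
move=> Tij; have [|ja] := @eq_bigmax_cond _ [pred j | 0 < T i j] (fun j => d - col j)%N.
  by apply/card_gt0P; exists j.
rewrite inE /lo => Tija ->; exists ja => //; have := ltn_ord (col ja); lia.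
Qed.

Let row_ranges_separated i i' j j' : i != i' -> 0 < T i j -> 0 < T i' j' ->
  (hi i' <= lo i)%N \/ (hi i <= lo i')%N.
Proof.
move=> ii' Tij Ti'j'.
have [ja Tija loi] := lo_attained Tij; have [jb Tijb hii] := hi_attained Tij.
have [ja' Ti'ja' loi'] := lo_attained Ti'j'; have [jb' Ti'jb' hii'] := hi_attained Ti'j'.
case: (leqP (hi i') (lo i)) => [|lt1]; first by left.
case: (leqP (hi i) (lo i')) => [|lt2]; first by right.
exfalso; case: (ltngtP (lo i) (lo i')) => lo_cmp.
- apply: (no_interleaving ii' (j1 := ja) (j2 := ja') (j3 := jb)) => //;
    by apply: lt_r_of_lt_col; lia.
- by apply: (no_interleaving (i := i') (i' := i) _ (j1 := ja') (j2 := ja) (j3 := jb'));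
    rewrite 1?eq_sym //; apply: lt_r_of_lt_col; lia.
- have eq_ja : ja = ja' by apply: (@perm_inj _ col); apply: ord_inj; lia.
  subst ja'; apply: (no_shared_column_same_side ii' Tija Ti'ja' Tijb Ti'jb').
  by apply: mulr_gt0; rewrite subr_gt0; apply: lt_r_of_lt_col; lia.
Qed.

Local Notation row := (sort_perm (fun i => lo i + hi i)%N).

Lemma plain_drawing_of_forbidden_patterns : exists lam mu : 'S_d, plain_drawing T lam mu.
Proof.
exists col^-1%g, row^-1%g.
suff no_crossing i i' j j' : (col j < col j')%N -> (row i' < row i)%N ->
    0 < T i j -> 0 < T i' j' -> False.
  move=> a a' b b' lt_a lt_b [Tij Ti'j'].
  by apply: (no_crossing _ _ _ _ _ _ Tij Ti'j'); rewrite !permKV.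
move=> lt_j lt_i Tij Ti'j'.
have mid_le : (lo i' + hi i' <= lo i + hi i)%N.
  rewrite leqNgt; apply/negP.
  by move=> /(@sort_perm_homo _ _ _ (fun i => lo i + hi i)%N i i'); lia.
have ii' : i != i' by apply: contraTneq lt_i => ->; rewrite ltnn.
have := lo_le Tij; have := hi_ge Tij; have := lo_le Ti'j'; have := hi_ge Ti'j'.
case: (row_ranges_separated ii' Tij Ti'j'); lia.
Qed.

End PlainDrawing.

Lemma extreme_point_opposite_moves (R : realType) (V : lmodType R) (A : V -> Prop)
    (x v : V) (c1 c2 : R) :
  v != 0 -> c1 * c2 < 0 -> A (x + c1 *: v) -> A (x + c2 *: v) -> ~ extreme_point A x.
Proof.
move=> v_neq0 c12_lt0 A1 A2 [_ x_extreme].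
have c21_neq0 : c2 - c1 != 0.
  by apply: contraTneq c12_lt0 => /eqP; rewrite subr_eq0 => /eqP ->; nra.
pose t := c2 / (c2 - c1).
have t_eq : t * (c2 - c1) = c2 by rewrite mulfVK.
have t_gt0 : 0 < t by nra.
have t_lt1 : t < 1 by nra.
have x_mid : x = t *: (x + c1 *: v) + (1 - t) *: (x + c2 *: v).
  rewrite !scalerDr !scalerA addrACA -!scalerDl subrKC scale1r.
  have -> : t * c1 + (1 - t) * c2 = 0 by nra.
  by rewrite scale0r addr0.
have [moved_eq _] := x_extreme _ _ t A1 A2 t_gt0 t_lt1 x_mid.
move/(congr1 (fun y => y - x)): moved_eq; rewrite addrC addKr subrr => /eqP.
rewrite scaler_eq0 (negbTE v_neq0) orbF => /eqP c1_eq0.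
by move: c12_lt0; rewrite c1_eq0 mul0r ltxx.
Qed.

Lemma sum_indicator_mul (R : pzSemiRingType) (n : nat) (j : 'I_n) (F : 'I_n -> R) :
  \sum_l (l == j)%:R * F l = F j.
Proof.
rewrite (bigD1 j) //= eqxx mul1r big1 ?addr0 // => l /negbTE ->.
by rewrite mul0r.
Qed.

Section RankOneUpdate.
Variables (R : realType) (d : nat).

Definition rank_one_update (T : 'M[R]_d) (a b : 'I_d -> R) : 'M[R]_d :=
  T + \matrix_(k, l) (a k * b l).

Lemma rank_one_update_mul T a b (v : 'cV[R]_d) k :
  (rank_one_update T a b *m v) k 0 = (T *m v) k 0 + a k * \sum_l b l * v l 0.
Proof.
rewrite mulmxDl mxE; congr (_ + _); rewrite mxE mulr_sumr.
by apply: eq_bigr => l _; rewrite mxE mulrA.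
Qed.

Lemma TP_rank_one_update (g : 'cV[R]_d) T a b :
  TP g T -> \sum_k a k = 0 -> \sum_l b l * g l 0 = 0 ->
  (forall k l, 0 <= T k l + a k * b l) -> TP g (rank_one_update T a b).
Proof.
move=> [_ T_colsum Tg] sum_a sum_bg update_ge0; split.
- by move=> k l; rewrite !mxE; apply: update_ge0.
- move=> l; under eq_bigr do rewrite !mxE.
  by rewrite big_split /= T_colsum -mulr_suml sum_a mul0r addr0.
- apply/matrixP => k l; rewrite ord1 rank_one_update_mul sum_bg mulr0 addr0.
  by rewrite Tg.
Qed.

End RankOneUpdate.

Section OrbitExchange.
Variables (R : realType) (d : nat) (g p : 'cV[R]_d).
Hypothesis g_gt0 : forall j, 0 < g j 0.

Definition ratio (j : 'I_d) : R := p j 0 / g j 0.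

Lemma TP_exchange (T : 'M[R]_d) (i i' j j' : 'I_d) :
  TP g T -> i != i' -> j != j' -> 0 < T i j -> 0 < T i' j' ->
  exists2 e, 0 < e &
    TP_orbit g p (T *m p + (e * (ratio j' - ratio j)) *: (delta_mx i 0 - delta_mx i' 0)).
Proof.
move=> TP_T ii' jj' Tij Ti'j'; have [T_ge0 _ _] := TP_T.
pose e := Num.min (T i j * g j 0) (T i' j' * g j' 0).
have e_gt0 : 0 < e by rewrite lt_min !mulr_gt0.
have e_le_ij : e / g j 0 <= T i j by rewrite ler_pdivrMr // ge_min lexx.
have e_le_i'j' : e / g j' 0 <= T i' j' by rewrite ler_pdivrMr // ge_min lexx orbT.
pose a (k : 'I_d) := e * ((k == i)%:R - (k == i')%:R).
pose b (l : 'I_d) := (l == j')%:R / g j' 0 - (l == j)%:R / g j 0.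
have sum_b (v : 'cV[R]_d) : \sum_l b l * v l 0 = v j' 0 / g j' 0 - v j 0 / g j 0.
  rewrite /b; under eq_bigr do rewrite mulrBl -!mulrA.
  by rewrite sumrB !sum_indicator_mul !(mulrC _^-1).
have sum_indicator (x : 'I_d) : \sum_k (k == x)%:R = 1 :> R.
  by rewrite -[RHS](sum_indicator_mul x (fun=> 1)); apply: eq_bigr => k _; rewrite mulr1.
exists e => //; exists (rank_one_update T a b); split.
  apply: TP_rank_one_update => //.
  - by rewrite -mulr_sumr sumrB !sum_indicator subrr mulr0.
  - by rewrite sum_b !divff ?gt_eqF // subrr.
  move=> k l; have := T_ge0 k l; rewrite /a /b.
  have e_gj_ge0 : 0 <= e / g j 0 by rewrite divr_ge0 ?ltW.
  have e_gj'_ge0 : 0 <= e / g j' 0 by rewrite divr_ge0 ?ltW.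
  have i'_i : (i' == i) = false by rewrite eq_sym (negbTE ii').
  have j'_j : (j' == j) = false by rewrite eq_sym (negbTE jj').
  have [->|k_i] := eqVneq k i; last have [->|k_i'] := eqVneq k i';
    (have [->|l_j] := eqVneq l j; last have [->|l_j'] := eqVneq l j');
    rewrite ?eqxx ?(negbTE ii') ?(negbTE jj') ?i'_i ?j'_j ?(negbTE k_i) ?(negbTE k_i')
      ?(negbTE l_j) ?(negbTE l_j') /= ?(mulr0, mul0r, mulr1, mul1r, subr0, sub0r);
    lra.
apply/matrixP => k l; rewrite ord1 rank_one_update_mul sum_b !mxE eqxx !andbT /a /ratio.
ring.
Qed.

Variable T : 'M[R]_d.
Hypothesis TP_T : TP g T.
Hypothesis Tp_extreme : extreme_point (TP_orbit g p) (T *m p).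

Let delta_sub_neq0 (i i' : 'I_d) : i != i' -> delta_mx i 0 - delta_mx i' 0 != 0 :> 'cV[R]_d.
Proof.
move=> ii'; apply/eqP => /matrixP/(_ i 0)/eqP.
by rewrite !mxE eqxx (negbTE ii') subr0 oner_eq0.
Qed.

Lemma extreme_orbit_no_interleaving (i i' j1 j2 j3 : 'I_d) : i != i' ->
  ratio j1 < ratio j2 -> ratio j2 < ratio j3 ->
  0 < T i j1 -> 0 < T i j3 -> 0 < T i' j2 -> False.
Proof.
move=> ii' r12 r23 Tij1 Tij3 Ti'j2.
have j1j2 : j1 != j2 by apply: contraTneq r12 => ->; rewrite ltxx.
have j3j2 : j3 != j2 by apply: contraTneq r23 => ->; rewrite ltxx.
have [e1 e1_gt0 orbit1] := TP_exchange TP_T ii' j1j2 Tij1 Ti'j2.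
have [e3 e3_gt0 orbit3] := TP_exchange TP_T ii' j3j2 Tij3 Ti'j2.
apply: (extreme_point_opposite_moves (delta_sub_neq0 ii') _ orbit1 orbit3 Tp_extreme).
rewrite -[ratio j2 - ratio j3]opprB mulrN mulrN oppr_lt0.
by rewrite !mulr_gt0 // subr_gt0.
Qed.

Lemma extreme_orbit_no_shared_column_same_side (i i' j ja jb : 'I_d) : i != i' ->
  0 < T i j -> 0 < T i' j -> 0 < T i ja -> 0 < T i' jb ->
  0 < (ratio ja - ratio j) * (ratio jb - ratio j) -> False.
Proof.
move=> ii' Tij Ti'j Tija Ti'jb same_side.
have jja : j != ja by apply: contraTneq same_side => <-; rewrite subrr mul0r ltxx.
have jjb : j != jb by apply: contraTneq same_side => <-; rewrite subrr mulr0 ltxx.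
have [e1 e1_gt0 orbit1] := TP_exchange TP_T ii' jjb Tij Ti'jb.
have i'i : i' != i by rewrite eq_sym.
have [e2 e2_gt0 orbit2] := TP_exchange TP_T i'i jja Ti'j Tija.
rewrite -[delta_mx i' 0 - _]opprB scalerN -scaleNr in orbit2.
apply: (extreme_point_opposite_moves (delta_sub_neq0 ii') _ orbit1 orbit2 Tp_extreme).
rewrite mulrN oppr_lt0 mulrACA; apply: mulr_gt0; first exact: mulr_gt0.
by rewrite mulrC.
Qed.

Lemma extreme_orbit_plain_drawing :
  injective ratio -> exists lam mu : 'S_d, plain_drawing T lam mu.
Proof.
move=> ratio_inj; apply: (plain_drawing_of_forbidden_patterns ratio_inj).
- exact: extreme_orbit_no_interleaving.
- exact: extreme_orbit_no_shared_column_same_side.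
Qed.

End OrbitExchange.

Lemma gibbs_gt0 (R : realType) (d : nat) (beta : R) (E : 'I_d -> R) (i0 j : 'I_d) :
  0 < gibbs beta E i0 j 0.
Proof.
have qfac_gt0 k : 0 < qfac beta E k i0 by apply: expR_gt0.
rewrite mxE divr_gt0 // (bigD1 i0) //= ltr_pwDl //.
by apply: sumr_ge0 => k _; apply: ltW.
Qed.

Theorem mainTheorem10 (R : realType) (d : nat) (beta : R) (E : 'I_d -> R)
    (i0 : 'I_d) (p : 'cV[R]_d) (T : 'M[R]_d) :
  (1 < d)%N -> 0 < beta -> val i0 = 0%N -> E i0 = 0 -> injective E ->
  is_state p ->
  injective (fun i : 'I_d => p i 0 / gibbs beta E i0 i 0) ->
  extreme_point (TP (gibbs beta E i0)) T ->
  ~ biplanar (gibbs beta E i0) T ->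
  ~ extreme_point (TP_orbit (gibbs beta E i0) p) (T *m p).
Proof.
move=> _ _ _ _ _ _ ratio_inj T_extreme not_biplanar Tp_extreme; apply: not_biplanar.
split=> //; apply: (extreme_orbit_plain_drawing (gibbs_gt0 beta E i0) T_extreme.1).
- exact: Tp_extreme.
- exact: ratio_inj.
Qed.
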